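(* Let $p>2$ be the exponent of (P), $\varepsilon\in(0,2)$, $\rho>0$, and $\gamma$ with $1>\gamma\ge\frac2p+\frac\varepsilon2+\frac{\rho}{2p}$, and let $C>0$. Then there is a constant $C_{\rm osc}>0$ independent of $h$ such that every strictly positive $u_h\in U_h$ with $\mathcal E_h(u_h)\le Ch^{-\rho/(2+p)}$ satisfies $$\frac{u_h(x_i,y_j)}{u_h(x_{\hat i},y_{\hat j})}\le C_{\rm osc}$$ for all $i\in\{1,\dots,N_x\}$, $j\in\{1,\dots,N_y\}$, $\hat i\in\{i-1,i,i+1\}$ and $\hat j\in\{j-1,j,j+1\}$ (indices taken periodically).
   Context: Discretization setting. Let $L_x,L_y>0$, $\mathcal O^x=(0,L_x)$, $\mathcal O^y=(0,L_y)$, $\mathcal O=\mathcal O^x\times\mathcal O^y$; all functions are $\mathcal O$-periodic. For $h\in(0,1)$ let $h_x=L_x/N_x$, $h_y=L_y/N_y$ with $\hat c_1h\le h_x,h_y\le\hat C_2h$ for fixed constants $0<\hat c_1\le\hat C_2$ (Assumption (S)). Nodes are $x_i=(i-1)h_x$ and $y_j=(j-1)h_y$, with indices taken periodically. $U_h$ is the space of continuous periodic functions on $\overline{\mathcal O}$ that are bilinear on each rectangle $(x_i,x_{i+1})\times(y_j,y_{j+1})$. $\mathcal I_h^x$ and $\mathcal I_h^y$ are the nodal (piecewise linear) interpolation operators in $x$ and in $y$, each acting in its own variable for fixed value of the other; $\mathcal I_h^{xy}=\mathcal I_h^x\mathcal I_h^y$. For $u_h\in U_h$, $\Delta_hu_h\in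 U_h$ is the discrete Laplacian, given at nodes by the standard five-point formula $\Delta_hu_h=\frac{u_h(x+h_x,y)-2u_h(x,y)+u_h(x-h_x,y)}{h_x^2}+\frac{u_h(x,y+h_y)-2u_h(x,y)+u_h(x,y-h_y)}{h_y^2}$. (P): $F\in C^2((0,\infty))$, $F=+\infty$ on $(-\infty,0]$, and there are $p>2$ and positive constants with $F(u)\ge c_1u^{-p}$, $|F'(u)|\le\hat Cu^{-p-1}+\hat C$, and $\tilde c_1u^{-p-2}-\tilde c_2\le F''(u)\le\tilde Cu^{-p-2}+\tilde C$ for $u>0$. The regularized discrete energy is $$\mathcal E_h(u_h)=\tfrac12\int_{\mathcal O}\big[\mathcal I_h^y(|\partial_xu_h|^2)+\mathcal I_h^x(|\partial_yu_h|^2)\big]+\int_{\mathcal O}\mathcal I_h^{xy}(F(u_h))+\tfrac{h^\varepsilon}{2}\int_{\mathcal O}\mathcal I_h^{xy}(|\Delta_hu_h|^2).$$ *)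

From Stdlib Require Import Reals Lra Lia.
From Coquelicot Require Import Coquelicot.
Open Scope R_scope.

Fixpoint sum_lt (n : nat) (f : nat -> R) : R :=
  match n with
  | O => 0
  | S m => sum_lt m f + f m
  end.

(* Periodic node indices: nodes are numbered 0..N-1 (the paper uses 1..N),
   and indices are taken modulo N. *)
Definition next (N i : nat) : nat := ((i + 1) mod N)%nat.
Definition prev (N i : nat) : nat := ((i + N - 1) mod N)%nat.

(* Assumption (P) on F (restricted to (0,oo); F = +oo on (-oo,0] is never
   evaluated since u_h > 0). *)
Definition assumption_P (F : R -> R) (p : R) : Prop :=
  (forall x, 0 < x -> ex_derive F x /\ ex_derive (Derive F) x
                      /\ continuous (Derive (Derive F)) x) /\
  exists c1 Ch ct1 ct2 Ct : R,
    0 < c1 /\ 0 < Ch /\ 0 < ct1 /\ 0 < ct2 /\ 0 < Ct /\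
    forall x, 0 < x ->
      c1 * Rpower x (- p) <= F x /\
      Rabs (Derive F x) <= Ch * Rpower x (- p - 1) + Ch /\
      ct1 * Rpower x (- p - 2) - ct2 <= Derive (Derive F) x /\
      Derive (Derive F) x <= Ct * Rpower x (- p - 2) + Ct.

Section Energy.
(* A function u_h in U_h is determined by its nodal values
   u i j = u_h(x_i, y_j), 0 <= i < Nx, 0 <= j < Ny. *)
Variables (Lx Ly : R) (Nx Ny : nat) (F : R -> R) (eps h : R)
          (u : nat -> nat -> R).

Definition hx : R := Lx / INR Nx.
Definition hy : R := Ly / INR Ny.

Definition uv (i j : nat) : R := u (i mod Nx)%nat (j mod Ny)%nat.

(* on cell [x_i,x_{i+1}]x[y_j,y_{j+1}], d_x u_h at y = y_j / d_y u_h at x = x_i *)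
Definition Dx (i j : nat) : R := (uv (i + 1) j - uv i j) / hx.
Definition Dy (i j : nat) : R := (uv i (j + 1) - uv i j) / hy.

Definition lap (i j : nat) : R :=
  (uv (i + 1) j - 2 * uv i j + uv (i + Nx - 1) j) / (hx ^ 2) +
  (uv i (j + 1) - 2 * uv i j + uv i (j + Ny - 1)) / (hy ^ 2).

(* Exact value of the integrand of E_h over the cell (i,j):
   - I_h^y(|d_x u_h|^2) is linear in y between the values (Dx i j)^2 and
     (Dx i (j+1))^2 (d_x u_h is independent of x on the cell);
   - I_h^x(|d_y u_h|^2) likewise in x;
   - I_h^{xy}(g) is bilinear, its cell integral is hx*hy/4 * (sum of corners). *)
Definition cell_energy (i j : nat) : R :=
  / 2 * (hx * hy * ((Dx i j) ^ 2 + (Dx i (j + 1)) ^ 2) / 2)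
  + / 2 * (hx * hy * ((Dy i j) ^ 2 + (Dy (i + 1) j) ^ 2) / 2)
  + hx * hy * (F (uv i j) + F (uv (i + 1) j) + F (uv i (j + 1))
               + F (uv (i + 1) (j + 1))) / 4
  + Rpower h eps / 2 *
      (hx * hy * ((lap i j) ^ 2 + (lap (i + 1) j) ^ 2 + (lap i (j + 1)) ^ 2
                  + (lap (i + 1) (j + 1)) ^ 2) / 4).

Definition energy : R :=
  sum_lt Nx (fun i => sum_lt Ny (fun j => cell_energy i j)).

End Energy.

(* Two pieces of the energy live on every cell and are each bounded by the
   total energy C h^(-q), q = rho/(2+p): the potential term controls u from
   below, u^p >= c h^(2+q), and the curvature term controls the discrete
   Laplacian from above, h^eps h^2 |Delta_h u|^2 <= c' h^(-q).  When
   2/p + eps/2 + rho/(2p) <= 1 the two powers of h match, so h^2 |Delta_h u|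
   <= K u at every node.  Since all nodal values are positive, the five-point
   formula then bounds each neighbour of a node by (K + 2 + 2 r) times its
   value, r bounding the squared aspect ratio; two such steps handle the
   diagonal neighbours. *)

From Pilot Require Import Defs.
From Stdlib Require Import Reals Lra Lia.
From Coquelicot Require Import Coquelicot.
Open Scope R_scope.

Lemma Rpower_1_l (z : R) : Rpower 1 z = 1.
Proof. unfold Rpower. rewrite ln_1, Rmult_0_r. apply exp_0. Qed.

Lemma Rpower_2 (x : R) : 0 < x -> Rpower x 2 = x ^ 2.
Proof. intros Hx. rewrite <- Rpower_pow by exact Hx. f_equal. Qed.

Lemma Rpower_pos (x y : R) : 0 < Rpower x y.
Proof. apply exp_pos. Qed.

Lemma Rle_Rpower_base_le1 (h x y : R) :
  0 < h <= 1 -> x <= y -> Rpower h y <= Rpower h x.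
Proof.
  intros Hh Hxy.
  replace y with (x + (y - x)) by ring. rewrite Rpower_plus.
  assert (Hsmall : Rpower h (y - x) <= 1).
  { rewrite <- (Rpower_1_l (y - x)). apply Rle_Rpower_l; lra. }
  pose proof (Rpower_pos h x). nra.
Qed.

Lemma node_sq_lower_bound (a c1 C p q h A v : R) :
  0 < a -> 0 < c1 -> 0 < C -> 0 < p -> 0 < h -> 0 < v -> a ^ 2 * h ^ 2 <= A ->
  A * (c1 * Rpower v (- p)) / 4 <= C * Rpower h (- q) ->
  Rpower (a ^ 2 * c1 / (4 * C)) (2 / p) * Rpower h (2 * (2 + q) / p) <= v ^ 2.
Proof.
  intros Ha Hc1 HC Hp Hh Hv HA HF.
  set (mu := a ^ 2 * c1 / (4 * C)).
  assert (Hmu : 0 < mu).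
  { unfold mu. apply Rdiv_lt_0_compat; [apply Rmult_lt_0_compat; [apply pow_lt |] |]; lra. }
  assert (Hpow : mu * Rpower h (2 + q) <= Rpower v p).
  { rewrite Rpower_plus, Rpower_2 by exact Hh.
    rewrite !Rpower_Ropp in HF.
    pose proof (Rpower_pos v p) as HV. pose proof (Rpower_pos h q) as HH.
    set (V := Rpower v p) in *. set (H := Rpower h q) in *.
    assert (Hscaled : a ^ 2 * h ^ 2 * (c1 * / V) / 4 <= C * / H).
    { eapply Rle_trans; [| exact HF]. apply Rmult_le_compat_r; [lra |].
      apply Rmult_le_compat_r; [| exact HA].
      apply Rmult_le_pos; [lra | apply Rlt_le, Rinv_0_lt_compat; exact HV]. }
    unfold mu. apply Rmult_le_reg_r with (4 * C * / V * / H).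
    { apply Rmult_lt_0_compat; [apply Rmult_lt_0_compat |]; try apply Rinv_0_lt_compat; lra. }
    replace (a ^ 2 * c1 / (4 * C) * (h ^ 2 * H) * (4 * C * / V * / H))
      with (a ^ 2 * h ^ 2 * (c1 * / V) / 4 * 4) by (field; lra).
    replace (V * (4 * C * / V * / H)) with (C * / H * 4) by (field; lra).
    lra. }
  assert (Ev : v ^ 2 = Rpower (Rpower v p) (2 / p)).
  { rewrite Rpower_mult, <- Rpower_2 by exact Hv. f_equal. field. lra. }
  assert (Eh : Rpower h (2 * (2 + q) / p) = Rpower (Rpower h (2 + q)) (2 / p)).
  { rewrite Rpower_mult. f_equal. field. lra. }
  rewrite Ev, Eh, Rpower_mult_distr by (try apply Rpower_pos; exact Hmu).
  apply Rle_Rpower_l.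
  - apply Rlt_le, Rdiv_lt_0_compat; lra.
  - split; [| exact Hpow]. apply Rmult_lt_0_compat; [exact Hmu | apply Rpower_pos].
Qed.

Lemma scaled_lap_sq_upper_bound (a C eps q h A L : R) :
  0 < a -> 0 < h -> a ^ 2 * h ^ 2 <= A ->
  Rpower h eps / 2 * (A * L ^ 2 / 4) <= C * Rpower h (- q) ->
  (h ^ 2 * L) ^ 2 <= 8 * C / a ^ 2 * Rpower h (2 - eps - q).
Proof.
  intros Ha Hh HA HL.
  assert (Hscaled : Rpower h eps / 2 * (a ^ 2 * h ^ 2 * L ^ 2 / 4) <= C * Rpower h (- q)).
  { eapply Rle_trans; [| exact HL]. pose proof (Rpower_pos h eps).
    pose proof (pow2_ge_0 L). apply Rmult_le_compat_l; [lra |]. nra. }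
  assert (Eh2 : Rpower h eps * Rpower h (2 - eps) = h ^ 2).
  { rewrite <- Rpower_plus, <- Rpower_2 by exact Hh. f_equal. ring. }
  replace (2 - eps - q) with (- q + (2 - eps)) by ring.
  rewrite Rpower_plus.
  pose proof (Rpower_pos h (2 - eps)) as HG.
  apply Rmult_le_reg_r with (a ^ 2 / 8). { apply Rdiv_lt_0_compat; [apply pow_lt |]; lra. }
  replace ((h ^ 2 * L) ^ 2 * (a ^ 2 / 8))
    with (Rpower h eps / 2 * (a ^ 2 * h ^ 2 * L ^ 2 / 4) * Rpower h (2 - eps)).
  2:{ rewrite <- Eh2. field. }
  replace (8 * C / a ^ 2 * (Rpower h (- q) * Rpower h (2 - eps)) * (a ^ 2 / 8))
    with (C * Rpower h (- q) * Rpower h (2 - eps)) by (field; lra).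
  apply Rmult_le_compat_r; lra.
Qed.

Definition lap_scale (a c1 C p : R) : R :=
  sqrt (8 * C / a ^ 2 / Rpower (a ^ 2 * c1 / (4 * C)) (2 / p)).

Lemma scaled_lap_le_node (a c1 C p q eps h A v L : R) :
  0 < a -> 0 < c1 -> 0 < C -> 0 < p -> 0 < h <= 1 -> 0 < v -> a ^ 2 * h ^ 2 <= A ->
  2 * (2 + q) / p <= 2 - eps - q ->
  A * (c1 * Rpower v (- p)) / 4 <= C * Rpower h (- q) ->
  Rpower h eps / 2 * (A * L ^ 2 / 4) <= C * Rpower h (- q) ->
  h ^ 2 * Rabs L <= lap_scale a c1 C p * v.
Proof.
  intros Ha Hc1 HC Hp Hh Hv HA Hexp HF HL.
  pose proof (node_sq_lower_bound a c1 C p q h A v Ha Hc1 HC Hp (proj1 Hh) Hv HA HF) as Hnode.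
  pose proof (scaled_lap_sq_upper_bound a C eps q h A L Ha (proj1 Hh) HA HL) as Hlap.
  set (m := Rpower (a ^ 2 * c1 / (4 * C)) (2 / p)) in *.
  set (D := 8 * C / a ^ 2) in *.
  assert (Hm : 0 < m) by apply Rpower_pos.
  assert (HD : 0 < D) by (apply Rdiv_lt_0_compat; [| apply pow_lt]; lra).
  assert (Hsq : (h ^ 2 * L) ^ 2 <= (lap_scale a c1 C p * v) ^ 2).
  { unfold lap_scale; fold m D.
    rewrite (Rpow_mult_distr (sqrt _)), pow2_sqrt by (apply Rlt_le, Rdiv_lt_0_compat; assumption).
    apply Rle_trans with (D * Rpower h (2 * (2 + q) / p)).
    - eapply Rle_trans; [exact Hlap |].
      apply Rmult_le_compat_l; [lra |]. apply Rle_Rpower_base_le1; assumption.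
    - apply Rmult_le_reg_r with m; [exact Hm |].
      replace (D / m * v ^ 2 * m) with (D * v ^ 2) by (field; lra).
      rewrite Rmult_assoc. apply Rmult_le_compat_l; lra. }
  rewrite <- (Rsqr_pow2 (h ^ 2 * L)), <- (Rsqr_pow2 (lap_scale _ _ _ _ * v)) in Hsq.
  apply Rsqr_le_abs_0 in Hsq.
  rewrite Rabs_mult, (Rabs_pos_eq (h ^ 2)) in Hsq by apply pow2_ge_0.
  rewrite (Rabs_pos_eq (lap_scale _ _ _ _ * v)) in Hsq; [exact Hsq |].
  apply Rmult_le_pos; [apply sqrt_pos | lra].
Qed.


Lemma stencil_neighbor_le (hx hy A1 A2 B1 B2 v L K r : R) :
  0 < hx -> 0 < hy -> 0 <= A2 -> 0 <= B1 -> 0 <= B2 -> 0 <= v ->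
  L = (A1 + A2 - 2 * v) / hx ^ 2 + (B1 + B2 - 2 * v) / hy ^ 2 ->
  hx ^ 2 * Rabs L <= K * v -> hx ^ 2 / hy ^ 2 <= r ->
  A1 <= (K + 2 + 2 * r) * v.
Proof.
  intros Hx Hy HA2 HB1 HB2 Hv HL HK Hr.
  set (s := hx ^ 2 / hy ^ 2) in *.
  assert (Hs : 0 <= s).
  { unfold s. apply Rlt_le, Rdiv_lt_0_compat; apply pow_lt; assumption. }
  assert (Hexpand : hx ^ 2 * L = A1 + A2 - 2 * v + s * (B1 + B2 - 2 * v)).
  { rewrite HL. unfold s. field. lra. }
  assert (hx ^ 2 * L <= hx ^ 2 * Rabs L).
  { apply Rmult_le_compat_l; [apply pow2_ge_0 | apply Rle_abs]. }
  assert (0 <= s * (B1 + B2)) by (apply Rmult_le_pos; lra).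
  assert (s * v <= r * v) by (apply Rmult_le_compat_r; lra).
  nra.
Qed.

Lemma sq_ratio_le (a b h x y : R) :
  0 < a -> 0 < h -> a * h <= y -> 0 <= x <= b * h -> x ^ 2 / y ^ 2 <= b ^ 2 / a ^ 2.
Proof.
  intros Ha Hh Hy Hx.
  assert (Hy0 : 0 < y) by (apply Rlt_le_trans with (a * h); [apply Rmult_lt_0_compat |]; assumption).
  assert (Hcross : x * a <= b * y) by nra.
  replace (x ^ 2 / y ^ 2) with ((x / y) ^ 2) by (field; lra).
  replace (b ^ 2 / a ^ 2) with ((b / a) ^ 2) by (field; lra).
  apply pow_incr. split.
  - apply Rmult_le_pos; [lra | apply Rlt_le, Rinv_0_lt_compat; lra].
  - apply Rmult_le_reg_r with (y * a); [nra |].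
    replace (x / y * (y * a)) with (x * a) by (field; lra).
    replace (b / a * (y * a)) with (b * y) by (field; lra).
    exact Hcross.
Qed.

Lemma sum_lt_nonneg (n : nat) (f : nat -> R) :
  (forall k, (k < n)%nat -> 0 <= f k) -> 0 <= sum_lt n f.
Proof.
  induction n as [| n IH]; simpl; intros Hf; [lra |].
  assert (0 <= f n) by (apply Hf; lia).
  assert (0 <= sum_lt n f) by (apply IH; intros; apply Hf; lia).
  lra.
Qed.

Lemma sum_lt_term_le (n : nat) (f : nat -> R) (k : nat) :
  (forall k, (k < n)%nat -> 0 <= f k) -> (k < n)%nat -> f k <= sum_lt n f.
Proof.
  induction n as [| n IH]; simpl; intros Hf Hk; [lia |].
  assert (0 <= f n) by (apply Hf; lia).
  destruct (Nat.eq_dec k n) as [-> | Hkn].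
  - assert (0 <= sum_lt n f) by (apply sum_lt_nonneg; intros; apply Hf; lia). lra.
  - assert (f k <= sum_lt n f) by (apply IH; [intros; apply Hf |]; lia). lra.
Qed.

Lemma next_prev (N i : nat) : (i < N)%nat -> next N (prev N i) = i.
Proof.
  intros Hi. unfold next, prev.
  rewrite Nat.Div0.add_mod_idemp_l.
  replace (i + N - 1 + 1)%nat with (i + 1 * N)%nat by lia.
  rewrite Nat.Div0.mod_add. apply Nat.mod_small, Hi.
Qed.

Lemma prev_next (N i : nat) : (i < N)%nat -> prev N (next N i) = i.
Proof.
  intros Hi. unfold next, prev.
  replace ((i + 1) mod N + N - 1)%nat with ((i + 1) mod N + (N - 1))%nat by lia.
  rewrite Nat.Div0.add_mod_idemp_l.
  replace (i + 1 + (N - 1))%nat with (i + 1 * N)%nat by lia.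
  rewrite Nat.Div0.mod_add. apply Nat.mod_small, Hi.
Qed.

Lemma adjacent_lt (N i ih : nat) :
  (i < N)%nat -> (ih = prev N i \/ ih = i \/ ih = next N i) -> (ih < N)%nat.
Proof. intros Hi [-> | [-> | ->]]; try apply Nat.mod_upper_bound; lia. Qed.

Lemma periodic_adjacent_le (N : nat) (w : nat -> R) (M : R) (i ih : nat) :
  1 <= M ->
  (forall k, (k < N)%nat ->
     0 <= w k /\ w (next N k) <= M * w k /\ w (prev N k) <= M * w k) ->
  (i < N)%nat -> (ih = prev N i \/ ih = i \/ ih = next N i) ->
  w i <= M * w ih.
Proof.
  intros HM Hw Hi [-> | [-> | ->]].
  - rewrite <- (next_prev N i Hi) at 1. apply Hw, Nat.mod_upper_bound. lia.
  - destruct (Hw i Hi) as [Hwi _]. nra.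
  - rewrite <- (prev_next N i Hi) at 1. apply Hw, Nat.mod_upper_bound. lia.
Qed.

Section CellEnergy.

Variables (Lx Ly : R) (Nx Ny : nat) (F : R -> R) (eps h : R) (u : nat -> nat -> R).
Hypotheses (hx_pos : 0 < hx Lx Nx) (hy_pos : 0 < hy Ly Ny)
  (F_nonneg : forall i j, 0 <= F (uv Nx Ny u i j)).

Lemma cell_energy_ge_node_terms (i j : nat) :
  0 <= hx Lx Nx * hy Ly Ny * F (uv Nx Ny u i j) / 4 /\
  0 <= Rpower h eps / 2 * (hx Lx Nx * hy Ly Ny * lap Lx Ly Nx Ny u i j ^ 2 / 4) /\
  hx Lx Nx * hy Ly Ny * F (uv Nx Ny u i j) / 4
  + Rpower h eps / 2 * (hx Lx Nx * hy Ly Ny * lap Lx Ly Nx Ny u i j ^ 2 / 4)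
  <= cell_energy Lx Ly Nx Ny F eps h u i j.
Proof.
  unfold cell_energy.
  set (P := hx Lx Nx * hy Ly Ny).
  assert (HP : 0 < P) by (apply Rmult_lt_0_compat; assumption).
  pose proof (Rpower_pos h eps) as HR.
  set (l := lap Lx Ly Nx Ny u).
  pose proof (F_nonneg i j). pose proof (F_nonneg (i + 1)%nat j).
  pose proof (F_nonneg i (j + 1)%nat). pose proof (F_nonneg (i + 1)%nat (j + 1)%nat).
  pose proof (pow2_ge_0 (Defs.Dx Lx Nx Ny u i j)). pose proof (pow2_ge_0 (Defs.Dx Lx Nx Ny u i (j + 1))).
  pose proof (pow2_ge_0 (Defs.Dy Ly Nx Ny u i j)). pose proof (pow2_ge_0 (Defs.Dy Ly Nx Ny u (i + 1) j)).
  pose proof (pow2_ge_0 (l i j)). pose proof (pow2_ge_0 (l (i + 1)%nat j)).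
  pose proof (pow2_ge_0 (l i (j + 1)%nat)). pose proof (pow2_ge_0 (l (i + 1)%nat (j + 1)%nat)).
  set (grad := Defs.Dx Lx Nx Ny u i j ^ 2 + Defs.Dx Lx Nx Ny u i (j + 1) ^ 2
                + Defs.Dy Ly Nx Ny u i j ^ 2 + Defs.Dy Ly Nx Ny u (i + 1) j ^ 2).
  set (Fs := F (uv Nx Ny u (i + 1)%nat j) + F (uv Nx Ny u i (j + 1)%nat)
             + F (uv Nx Ny u (i + 1)%nat (j + 1)%nat)).
  set (ls := l (i + 1)%nat j ^ 2 + l i (j + 1)%nat ^ 2 + l (i + 1)%nat (j + 1)%nat ^ 2).
  assert (0 <= P * grad) by (apply Rmult_le_pos; unfold grad; lra).
  assert (0 <= P * Fs) by (apply Rmult_le_pos; unfold Fs; lra).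
  assert (0 <= Rpower h eps * (P * ls)) by (apply Rmult_le_pos; [| apply Rmult_le_pos; unfold ls]; lra).
  assert (0 <= P * F (uv Nx Ny u i j)) by (apply Rmult_le_pos; lra).
  assert (0 <= Rpower h eps * (P * l i j ^ 2)) by (apply Rmult_le_pos; [| apply Rmult_le_pos]; lra).
  split; [| split]; unfold grad, Fs, ls in *; lra.
Qed.

Lemma cell_energy_le_energy (i j : nat) : (i < Nx)%nat -> (j < Ny)%nat ->
  cell_energy Lx Ly Nx Ny F eps h u i j <= energy Lx Ly Nx Ny F eps h u.
Proof.
  intros Hi Hj.
  assert (Hcell : forall i j, 0 <= cell_energy Lx Ly Nx Ny F eps h u i j).
  { intros i' j'. destruct (cell_energy_ge_node_terms i' j') as [H1 [H2 H3]]. lra. }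
  unfold energy.
  apply Rle_trans with (sum_lt Ny (fun j => cell_energy Lx Ly Nx Ny F eps h u i j)).
  - apply (sum_lt_term_le Ny (fun j => cell_energy Lx Ly Nx Ny F eps h u i j));
      [intros; apply Hcell | exact Hj].
  - apply (sum_lt_term_le Nx
             (fun i => sum_lt Ny (fun j => cell_energy Lx Ly Nx Ny F eps h u i j)));
      [intros; apply sum_lt_nonneg; intros; apply Hcell | exact Hi].
Qed.

End CellEnergy.

Definition neighbor_ratio_bound (a b c1 C p : R) : R :=
  b ^ 2 * lap_scale a c1 C p + 2 + 2 * (b ^ 2 / a ^ 2).

Lemma neighbor_ratio_bound_ge1 (a b c1 C p : R) :
  0 < a -> 1 <= neighbor_ratio_bound a b c1 C p.
Proof.
  intros Ha. unfold neighbor_ratio_bound.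
  assert (0 <= b ^ 2 * lap_scale a c1 C p).
  { apply Rmult_le_pos; [apply pow2_ge_0 | apply sqrt_pos]. }
  assert (0 <= b ^ 2 / a ^ 2).
  { apply Rmult_le_pos; [apply pow2_ge_0 | apply Rlt_le, Rinv_0_lt_compat, pow_lt, Ha]. }
  lra.
Qed.

Lemma uv_next_l (Nx Ny : nat) (u : nat -> nat -> R) (i j : nat) :
  uv Nx Ny u (next Nx i) j = uv Nx Ny u (i + 1) j.
Proof. unfold uv, next. rewrite Nat.Div0.mod_mod. reflexivity. Qed.

Lemma uv_prev_l (Nx Ny : nat) (u : nat -> nat -> R) (i j : nat) :
  uv Nx Ny u (prev Nx i) j = uv Nx Ny u (i + Nx - 1) j.
Proof. unfold uv, prev. rewrite Nat.Div0.mod_mod. reflexivity. Qed.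

Lemma uv_next_r (Nx Ny : nat) (u : nat -> nat -> R) (i j : nat) :
  uv Nx Ny u i (next Ny j) = uv Nx Ny u i (j + 1).
Proof. unfold uv, next. rewrite Nat.Div0.mod_mod. reflexivity. Qed.

Lemma uv_prev_r (Nx Ny : nat) (u : nat -> nat -> R) (i j : nat) :
  uv Nx Ny u i (prev Ny j) = uv Nx Ny u i (j + Ny - 1).
Proof. unfold uv, prev. rewrite Nat.Div0.mod_mod. reflexivity. Qed.

Section EnergyBound.

Variables (Lx Ly : R) (Nx Ny : nat) (F : R -> R) (eps h : R) (u : nat -> nat -> R)
  (a b c1 C p q : R).
Hypotheses (Ha : 0 < a) (Hc1 : 0 < c1) (HC : 0 < C) (Hp : 0 < p) (Hh : 0 < h <= 1)
  (HNx : (0 < Nx)%nat) (HNy : (0 < Ny)%nat)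
  (Hhx : a * h <= hx Lx Nx <= b * h) (Hhy : a * h <= hy Ly Ny <= b * h)
  (Hu : forall i j, (i < Nx)%nat -> (j < Ny)%nat -> 0 < u i j)
  (HF : forall x, 0 < x -> c1 * Rpower x (- p) <= F x)
  (Hexp : 2 * (2 + q) / p <= 2 - eps - q)
  (HE : energy Lx Ly Nx Ny F eps h u <= C * Rpower h (- q)).

Local Notation v := (uv Nx Ny u).
Local Notation M := (neighbor_ratio_bound a b c1 C p).

Lemma hx_pos : 0 < hx Lx Nx.
Proof. apply Rlt_le_trans with (a * h); [apply Rmult_lt_0_compat |]; lra. Qed.

Lemma hy_pos : 0 < hy Ly Ny.
Proof. apply Rlt_le_trans with (a * h); [apply Rmult_lt_0_compat |]; lra. Qed.

Lemma uv_pos (i j : nat) : 0 < v i j.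
Proof. apply Hu; apply Nat.mod_upper_bound; lia. Qed.

Lemma F_uv_ge (i j : nat) : c1 * Rpower (v i j) (- p) <= F (v i j).
Proof. apply HF, uv_pos. Qed.

Lemma F_uv_nonneg (i j : nat) : 0 <= F (v i j).
Proof.
  eapply Rle_trans; [| apply F_uv_ge].
  apply Rmult_le_pos; [lra | apply Rlt_le, Rpower_pos].
Qed.

Lemma scaled_lap_le_uv (i j : nat) : (i < Nx)%nat -> (j < Ny)%nat ->
  h ^ 2 * Rabs (lap Lx Ly Nx Ny u i j) <= lap_scale a c1 C p * v i j.
Proof.
  intros Hi Hj.
  destruct (cell_energy_ge_node_terms Lx Ly Nx Ny F eps h u hx_pos hy_pos F_uv_nonneg i j)
    as [HFt [HLt Hsum]].
  pose proof (cell_energy_le_energy Lx Ly Nx Ny F eps h u hx_pos hy_pos F_uv_nonneg i j Hi Hj).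
  apply (scaled_lap_le_node a c1 C p q eps h (hx Lx Nx * hy Ly Ny)); try lra; [apply uv_pos | |].
  { replace (a ^ 2 * h ^ 2) with ((a * h) * (a * h)) by ring.
    apply Rmult_le_compat; nra. }
  assert (hx Lx Nx * hy Ly Ny * (c1 * Rpower (v i j) (- p))
          <= hx Lx Nx * hy Ly Ny * F (v i j)).
  { apply Rmult_le_compat_l; [apply Rlt_le, Rmult_lt_0_compat; [apply hx_pos | apply hy_pos] |].
    apply F_uv_ge. }
  lra.
Qed.

Lemma neighbors_le_uv (i j : nat) : (i < Nx)%nat -> (j < Ny)%nat ->
  v (next Nx i) j <= M * v i j /\ v (prev Nx i) j <= M * v i j /\
  v i (next Ny j) <= M * v i j /\ v i (prev Ny j) <= M * v i j.
Proof.
  intros Hi Hj.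
  pose proof (scaled_lap_le_uv i j Hi Hj) as Hlap.
  set (L := lap Lx Ly Nx Ny u i j) in *.
  set (K := b ^ 2 * lap_scale a c1 C p).
  assert (HRL : 0 <= Rabs L) by apply Rabs_pos.
  assert (Hstep : forall hz, 0 <= hz <= b * h -> hz ^ 2 * Rabs L <= K * v i j).
  { intros hz Hz. unfold K. rewrite Rmult_assoc.
    apply Rle_trans with (b ^ 2 * (h ^ 2 * Rabs L)).
    - rewrite <- Rmult_assoc. apply Rmult_le_compat_r; [exact HRL |].
      replace (b ^ 2 * h ^ 2) with ((b * h) ^ 2) by ring. apply pow_incr; lra.
    - apply Rmult_le_compat_l; [apply pow2_ge_0 | exact Hlap]. }
  pose proof hx_pos. pose proof hy_pos.
  assert (Rx : hx Lx Nx ^ 2 / hy Ly Ny ^ 2 <= b ^ 2 / a ^ 2) by (apply (sq_ratio_le a b h); lra).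
  assert (Ry : hy Ly Ny ^ 2 / hx Lx Nx ^ 2 <= b ^ 2 / a ^ 2) by (apply (sq_ratio_le a b h); lra).
  rewrite uv_next_l, uv_prev_l, uv_next_r, uv_prev_r.
  pose proof (uv_pos (i + 1) j). pose proof (uv_pos (i + Nx - 1) j).
  pose proof (uv_pos i (j + 1)). pose proof (uv_pos i (j + Ny - 1)). pose proof (uv_pos i j).
  assert (HL : L = (v (i + 1)%nat j + v (i + Nx - 1)%nat j - 2 * v i j) / hx Lx Nx ^ 2
                 + (v i (j + 1)%nat + v i (j + Ny - 1)%nat - 2 * v i j) / hy Ly Ny ^ 2)
    by (unfold L, lap; field; split; lra).
  unfold neighbor_ratio_bound; fold K.
  repeat split;
    [ apply (stencil_neighbor_le (hx Lx Nx) (hy Ly Ny) _ (v (i + Nx - 1)%nat j)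
               (v i (j + 1)%nat) (v i (j + Ny - 1)%nat) _ L)
    | apply (stencil_neighbor_le (hx Lx Nx) (hy Ly Ny) _ (v (i + 1)%nat j)
               (v i (j + 1)%nat) (v i (j + Ny - 1)%nat) _ L)
    | apply (stencil_neighbor_le (hy Ly Ny) (hx Lx Nx) _ (v i (j + Ny - 1)%nat)
               (v (i + 1)%nat j) (v (i + Nx - 1)%nat j) _ L)
    | apply (stencil_neighbor_le (hy Ly Ny) (hx Lx Nx) _ (v i (j + 1)%nat)
               (v (i + 1)%nat j) (v (i + Nx - 1)%nat j) _ L) ];
    try lra; try (apply Hstep; lra); rewrite HL; field; lra.
Qed.

Lemma node_le_adjacent (i j ih jh : nat) : (i < Nx)%nat -> (j < Ny)%nat ->
  (ih = prev Nx i \/ ih = i \/ ih = next Nx i) ->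
  (jh = prev Ny j \/ jh = j \/ jh = next Ny j) ->
  u i j <= M ^ 2 * u ih jh.
Proof.
  intros Hi Hj Hih Hjh.
  assert (HM : 1 <= M) by (apply neighbor_ratio_bound_ge1; exact Ha).
  pose proof (adjacent_lt Nx i ih Hi Hih) as Hih'.
  pose proof (adjacent_lt Ny j jh Hj Hjh) as Hjh'.
  assert (Hin : forall i j, (i < Nx)%nat -> (j < Ny)%nat -> u i j = v i j).
  { intros i' j' Hi' Hj'. unfold uv. rewrite !Nat.mod_small by assumption. reflexivity. }
  assert (Hy : v i j <= M * v i jh).
  { apply (periodic_adjacent_le Ny (v i) M j jh HM); [intros k Hk | exact Hj | exact Hjh].
    pose proof (uv_pos i k). pose proof (neighbors_le_uv i k Hi Hk). intuition lra. }
  assert (Hx : v i jh <= M * v ih jh).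
  { apply (periodic_adjacent_le Nx (fun k => v k jh) M i ih HM); [intros k Hk | exact Hi | exact Hih].
    pose proof (uv_pos k jh). pose proof (neighbors_le_uv k jh Hk Hjh'). intuition lra. }
  rewrite !Hin by assumption.
  assert (M * v i jh <= M * (M * v ih jh)) by (apply Rmult_le_compat_l; lra).
  lra.
Qed.

End EnergyBound.

Theorem lemma3p4 (Lx Ly c1hat C2hat : R) (F : R -> R)
  (p eps rho gamma C : R) :
  0 < Lx -> 0 < Ly -> 0 < c1hat -> c1hat <= C2hat ->
  2 < p -> assumption_P F p ->
  0 < eps < 2 -> 0 < rho ->
  gamma < 1 -> 2 / p + eps / 2 + rho / (2 * p) <= gamma ->
  0 < C ->
  exists Cosc : R, 0 < Cosc /\
    forall (h : R) (Nx Ny : nat) (u : nat -> nat -> R),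
      0 < h < 1 ->
      (0 < Nx)%nat -> (0 < Ny)%nat ->
      c1hat * h <= hx Lx Nx <= C2hat * h ->
      c1hat * h <= hy Ly Ny <= C2hat * h ->
      (forall i j, (i < Nx)%nat -> (j < Ny)%nat -> 0 < u i j) ->
      energy Lx Ly Nx Ny F eps h u <= C * Rpower h (- (rho / (2 + p))) ->
      forall i j ih jh : nat,
        (i < Nx)%nat -> (j < Ny)%nat ->
        (ih = prev Nx i \/ ih = i \/ ih = next Nx i) ->
        (jh = prev Ny j \/ jh = j \/ jh = next Ny j) ->
        u i j / u ih jh <= Cosc.
Proof.
  intros HLx HLy Ha Hab Hp HP Heps Hrho Hg1 Hg HC.
  destruct HP as [_ (c1 & ? & ? & ? & ? & Hc1 & _ & _ & _ & _ & HF)].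
  set (q := rho / (2 + p)).
  assert (Hexp : 2 * (2 + q) / p <= 2 - eps - q).
  { assert (2 * (2 + q) / p + q = 2 * (2 / p + rho / (2 * p))) by (unfold q; field; lra).
    lra. }
  exists (neighbor_ratio_bound c1hat C2hat c1 C p ^ 2). split.
  - pose proof (neighbor_ratio_bound_ge1 c1hat C2hat c1 C p Ha). nra.
  - intros h Nx Ny u Hh HNx HNy Hhx Hhy Hu HE i j ih jh Hi Hj Hih Hjh.
    assert (Hpos : 0 < u ih jh) by (apply Hu; eapply adjacent_lt; eassumption).
    apply Rmult_le_reg_r with (u ih jh); [exact Hpos |].
    unfold Rdiv. rewrite Rmult_assoc, Rinv_l, Rmult_1_r by lra.
    apply (node_le_adjacent Lx Ly Nx Ny F eps h u c1hat C2hat c1 C p q); try assumption; try lra.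
    exact (fun x Hx => proj1 (HF x Hx)).
Qed.
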